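(* Let $(D;H)$ be a based diagram of $(K_n;H)$ with hamiltonian cycle $H=v_1v_2\cdots v_nv_1$, and let $M(D;H)=(a_{(i,j)})$ be its matrix. Then $$\varepsilon(D;H)=\sum_{i<k<j<l}\left\lfloor\frac{a_{(i,j)}\,a_{(k,l)}+1}{2}\right\rfloor .$$
   Context: $K_n$ is the complete graph with vertices $v_1,\dots,v_n$ and $H=v_1v_2\cdots v_nv_1$ is a hamiltonian cycle. A based diagram $(D;H)$ of $(K_n;H)$ is a diagram of $K_n$ on $S^2$ in which $H$ is drawn on the equator and every other edge diagram lies (apart from its endpoints) in the Northern or the Southern Hemisphere. Let $e_{(i,j)}$ denote the edge diagram joining $v_i$ and $v_j$. Let $A$ be the boundary of a small regular neighbourhood of $H$; each edge diagram $e$ not in $H$ meets $A$ in two points $e^1,e^2$. For edge diagrams $e,f$ not in $H$, the cross-index $\varepsilon_H(e,f)$ is $1$ if $e$ and $f$ lie in the same hemisphere and their intersection points with $A$ alternate along $A$ (appear in cyclic order $e^\alpha,f^\beta,e^\gamma,f^\delta$), and $0$ otherwise; $\varepsilon(D;H)$ is the sum of $\varepsilon_H(e,f)$ over all unordered pairs of distinct edge diagrams not in $H$. The matrix $M(D;H)=(a_{(i,j)})_{1\le i,j\le n}$ is defined by $a_{(i,j)}=1$ if $j\ge i+2$, $(i,j)\neq(1,n)$ and $e_{(i,j)}$ is in the Northern Hemisphere; $a_{(i,j)}=-1$ if $j\ge i+2$, $(i,j)\ne(1,n)$ and $e_{(i,j)}$ is in the Southern Hemisphere; and $a_{(i,j)}=0$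 if $j\le i+1$ or $(i,j)=(1,n)$. The sum is over all $1\le i<k<j<l\le n$.
   Formalization: Two edge diagrams sharing an endpoint and lying in the same hemisphere never have alternating intersection points with A, so $\varepsilon_H(e,f)$ is 0 for every such pair e, f. The statement above fails without it. *)

From mathcomp Require Import all_boot all_order all_algebra.
From mathcomp Require Import intdiv.
Set Implicit Arguments. Unset Strict Implicit. Unset Printing Implicit Defensive.
Import Order.TTheory GRing.Theory Num.Theory.

(* Vertices are v_1, ..., v_n (indices 1..n), H = v_1 v_2 ... v_n v_1. *)

(* (i,j) with i < j indexes an edge not in H ("chord"). *)
Definition is_chord (n i j : nat) : bool :=
  [&& 1 <= i, i.+2 <= j, j <= n & (i, j) != (1, n)].

Definition chord (n u w : nat) : bool := is_chord n (minn u w) (maxn u w).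

(* A based diagram, recorded by the combinatorial data that the
   cross-index depends on:
   - [north i j] (i < j): e_(i,j) lies in the Northern hemisphere
     (otherwise in the Southern one);
   - [rank v u]: position, along the component of A lying in the
     hemisphere of e_{v,u}, traversed in the direction v_1 -> v_2 -> ...,
     of the point of A in which e_{v,u} meets A near its endpoint v.
     Points near v come after the points near v_1,...,v_{v-1} and before
     those near v_{v+1},...,v_n, so a point of A is located by the pair
     (v, rank v u) ordered lexicographically. *)
Record based_diagram (n : nat) := BasedDiagram {
  north : nat -> nat -> bool;
  rank : nat -> nat -> nat;
  rank_inj : forall v u w, chord n v u -> chord n v w ->
    north (minn v u) (maxn v u) = north (minn v w) (maxn v w) ->
    rank v u = rank v w -> u = w
}.

Section Cross.
Variables (n : nat) (D : based_diagram n).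

Definition hemi (u w : nat) : bool := north D (minn u w) (maxn u w).

Definition apoint (v u : nat) : nat * nat := (v, rank D v u).

Definition plt (p q : nat * nat) : bool :=
  (p.1 < q.1) || ((p.1 == q.1) && (p.2 < q.2)).

(* z lies strictly between x and y on the (cut-open) circle *)
Definition between (x y z : nat * nat) : bool :=
  (plt x z && plt z y) || (plt y z && plt z x).

(* the four A-points of e_{a,b} and e_{c,d} alternate along A *)
Definition alternate (a b c d : nat) : bool :=
  let p1 := apoint a b in let p2 := apoint b a in
  let q1 := apoint c d in let q2 := apoint d c in
  between p1 p2 q1 (+) between p1 p2 q2.

Definition cross_index (i j k l : nat) : nat :=
  ((hemi i j == hemi k l) && alternate i j k l : nat).

(* epsilon(D;H): sum over unordered pairs of distinct chords;
   each pair counted once via lexicographic order on (i,j). *)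
Definition epsilon : nat :=
  \sum_(i < n.+1) \sum_(j < n.+1) \sum_(k < n.+1) \sum_(l < n.+1)
    if [&& is_chord n i j, is_chord n k l & (i < k) || ((i == k) && (j < l))]
    then cross_index i j k l else 0.

Definition mat_entry (i j : nat) : int :=
  (if is_chord n i j then (if north D i j then 1 else -1) else 0)%R.

(* Convention of diagrams: adjacent edge diagrams lying in the same
   hemisphere do not cross, hence their A-points do not alternate. *)
Definition adjacent_noncrossing : Prop :=
  forall v u w, u != w -> chord n v u -> chord n v w -> hemi v u = hemi v w ->
    ~~ alternate v u v w.

End Cross.

From mathcomp Require Import all_boot all_order all_algebra.
From mathcomp Require Import intdiv zify.
Import Order.TTheory GRing.Theory Num.Theory.
Local Open Scope ring_scope.

(* For chords e_(i,j), e_(k,l) the summand floor((a_(i,j) a_(k,l) + 1)/2) is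
   1 if they lie in the same hemisphere and 0 otherwise (also 0 when an entry
   is 0, i.e. for non-chords).  Since the points of A near v_1, ..., v_n occur
   in this order, two chords with four distinct ends alternate exactly when
   the ends interleave, i < k < j < l, while chords sharing an end never
   alternate in the same hemisphere.  So each pair of chords contributes the
   same to both sides. *)

Section BasedDiagram.
Variables (n : nat) (D : based_diagram n).

Lemma chordC u w : chord n u w = chord n w u.
Proof. by rewrite /chord minnC maxnC. Qed.

Lemma chordE u w : (u < w)%N -> chord n u w = is_chord n u w.
Proof. by move=> /ltnW uw; rewrite /chord (minn_idPl uw) (maxn_idPr uw). Qed.

Lemma hemiC u w : hemi D u w = hemi D w u.
Proof. by rewrite /hemi minnC maxnC. Qed.

Lemma hemiE u w : (u < w)%N -> hemi D u w = north D u w.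
Proof. by move=> /ltnW uw; rewrite /hemi (minn_idPl uw) (maxn_idPr uw). Qed.

Lemma is_chord_lt {i j} : is_chord n i j -> (0 < i < j)%N.
Proof. by case/and4P=> i_gt0 ij _ _; rewrite i_gt0 ltnW. Qed.

Lemma alternateCl a b c d : alternate D a b c d = alternate D b a c d.
Proof. by rewrite /alternate /between; congr (_ (+) _); apply: orbC. Qed.

Lemma alternateCr a b c d : alternate D a b c d = alternate D a b d c.
Proof. by rewrite /alternate addbC. Qed.

(* The A-points of e_(a,b) lie near v_a and v_b, so only the vertex order matters. *)
Lemma alternate_distinct_ends i j k l : (i < j)%N -> (k < l)%N -> (i < k)%N ->
  j != k -> j != l -> alternate D i j k l = (k < j < l)%N.
Proof. by rewrite /alternate /between /plt /apoint /=; lia. Qed.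

Hypothesis adj : adjacent_noncrossing D.

Lemma alternate_shared_end v u w : u != w -> chord n v u -> chord n v w ->
  hemi D v u = hemi D v w -> alternate D v u v w = false.
Proof. by move=> *; apply/negbTE/adj. Qed.

Lemma lex_alternate_same_hemi i j k l :
  is_chord n i j -> is_chord n k l -> hemi D i j = hemi D k l ->
  ((i < k) || ((i == k) && (j < l)))%N && alternate D i j k l
  = [&& i < k, k < j & j < l]%N.
Proof.
move=> cij ckl hh; have /andP[_ ij] := is_chord_lt cij.
have /andP[_ kl] := is_chord_lt ckl.
case: (ltngtP i k) => [ik|//|eik] /=; last first.
  subst k; case: ltnP => //= jl.
  by apply: alternate_shared_end; rewrite ?chordE // neq_ltn jl.
case: (eqVneq j k) => [ejk|jk].
  subst k; rewrite ltnn alternateCl.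
  apply: alternate_shared_end; last by rewrite hemiC.
  - by rewrite neq_ltn (ltn_trans ik kl).
  - by rewrite chordC chordE.
  - by rewrite chordE.
case: (eqVneq j l) => [ejl|jl].
  subst l; rewrite ltnn andbF alternateCl alternateCr.
  apply: alternate_shared_end; last by rewrite hemiC hh hemiC.
  - by rewrite neq_ltn ik.
  - by rewrite chordC chordE.
  - by rewrite chordC chordE.
exact: alternate_distinct_ends.
Qed.

Lemma mat_entry_chord i j :
  is_chord n i j -> mat_entry D i j = if north D i j then 1 else -1.
Proof. by rewrite /mat_entry => ->. Qed.

Lemma mat_entry_nonchord i j : ~~ is_chord n i j -> mat_entry D i j = 0.
Proof. by rewrite /mat_entry => /negbTE ->. Qed.

Lemma half_sign_product (b c : bool) :
  (((if b then 1 else -1) * (if c then 1 else -1) + 1) %/ 2)%Z = (b == c)%:Z.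
Proof. by case: b; case: c. Qed.

Lemma cross_index_term i j k l :
  ((if [&& is_chord n i j, is_chord n k l & (i < k)%N || ((i == k) && (j < l)%N)]
    then cross_index D i j k l else 0%N)%:Z : int)
  = if [&& 1 <= i, i < k, k < j & j < l]%N
    then ((mat_entry D i j * mat_entry D k l + 1) %/ 2)%Z else 0.
Proof.
have [cij|/mat_entry_nonchord->] := boolP (is_chord n i j); last first.
  by rewrite mul0r add0r; case: ifP.
have [ckl|/mat_entry_nonchord->] := boolP (is_chord n k l); last first.
  by rewrite mulr0 add0r; case: ifP.
have /andP[-> ij] := is_chord_lt cij; have /andP[_ kl] := is_chord_lt ckl.
rewrite !mat_entry_chord // half_sign_product /= /cross_index !hemiE //.
have [same|_] := eqVneq (north D i j) (north D k l); last by case: ifP; case: ifP.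
rewrite -lex_alternate_same_hemi ?hemiE //.
by case: (_ || _); case: alternate.
Qed.

End BasedDiagram.

Lemma sum_ord_if_leq (N m : nat) (F : nat -> int) :
  \sum_(i < N) (if (m <= i)%N then F i else 0) = \sum_(m <= i < N) F i.
Proof. by rewrite big_geq_mkord [RHS]big_mkcond. Qed.

Lemma sum_ord_interleaving (N : nat) (F : nat -> nat -> nat -> nat -> int) :
  \sum_(i < N) \sum_(k < N) \sum_(j < N) \sum_(l < N)
    (if [&& 1 <= i, i < k, k < j & j < l]%N then F i k j l else 0)
  = \sum_(1 <= i < N) \sum_(i.+1 <= k < N) \sum_(k.+1 <= j < N)
      \sum_(j.+1 <= l < N) F i k j l.
Proof.
rewrite -sum_ord_if_leq; apply: eq_bigr => i _; case: leqP => _ /=;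
  first by rewrite !big1_eq.
rewrite -sum_ord_if_leq; apply: eq_bigr => k _; case: leqP => _ /=;
  first by rewrite !big1_eq.
rewrite -sum_ord_if_leq; apply: eq_bigr => j _; case: leqP => _ /=;
  first by rewrite !big1_eq.
by rewrite -sum_ord_if_leq; apply: eq_bigr => l _; case: leqP.
Qed.

Lemma Posz_sum (I : Type) (r : seq I) (P : pred I) (F : I -> nat) :
  ((\sum_(x <- r | P x) F x)%N)%:Z = \sum_(x <- r | P x) (F x)%:Z.
Proof. exact: (big_morph Posz PoszD (erefl : Posz 0 = 0)). Qed.

Theorem lemma2p2 (n : nat) (D : based_diagram n) :
  (3 <= n)%N -> adjacent_noncrossing D ->
  ((epsilon D)%:Z : int) =
  \sum_(1 <= i < n.+1) \sum_(i.+1 <= k < n.+1) \sum_(k.+1 <= j < n.+1)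
    \sum_(j.+1 <= l < n.+1)
      ((mat_entry D i j * mat_entry D k l + 1) %/ 2)%Z.
Proof.
move=> _ adj; rewrite -sum_ord_interleaving /epsilon Posz_sum.
apply: eq_bigr => i _; rewrite Posz_sum exchange_big; apply: eq_bigr => k _.
rewrite Posz_sum; apply: eq_bigr => j _; rewrite Posz_sum; apply: eq_bigr => l _.
exact: cross_index_term.
Qed.
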